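(* Let $G$ be a finite-rank splitter, let $0\neq U$ be a pure subgroup of $G$, and let $p$ be a prime with $1/p\in\mathrm{nuc}\,U\setminus\mathrm{nuc}\,G$. Then $\mathrm{Ext}(\mathbb{Q}^{(p)},G)=0$.
   Context: For a torsion-free abelian group $G\neq0$, $\mathrm{nuc}\,G$ is the largest subring $R$ of $\mathbb{Q}$ such that $G$ is an $R$-module. A torsion-free $R$-module $G$ over its nucleus $R$ is a finite-rank splitter if $\mathrm{Ext}(G',G)=0$ for all finite-rank $R$-submodules $G'$ of $G$. $\mathbb{Q}^{(p)}=\{z/p^k: z\in\mathbb{Z},k\in\mathbb{N}\}\subseteq\mathbb{Q}$. A subgroup $U\subseteq G$ is pure if $G/U$ is torsion-free. *)

From HB Require Import structures.
From mathcomp Require Import all_boot all_order all_algebra.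
Set Implicit Arguments. Unset Strict Implicit. Unset Printing Implicit Defensive.
Import Order.TTheory GRing.Theory Num.Theory.
Local Open Scope ring_scope.

Definition torsion_free (G : zmodType) : Prop :=
  forall (x : G) (n : nat), x *+ n.+1 = 0 -> x = 0.

Definition subgroup (G : zmodType) (S : G -> Prop) : Prop :=
  S 0 /\ forall x y, S x -> S y -> S (x - y).

(* q \in nuc S : multiplication by q (computed in the divisible hull) maps
   S into S, i.e. for every s in S there is t in S with (denq q) t = (numq q) s. *)
Definition in_nuc (G : zmodType) (S : G -> Prop) (q : rat) : Prop :=
  forall s, S s -> exists2 t, S t & t *~ denq q = s *~ numq q.

Definition nuc_submodule (G : zmodType) (S : G -> Prop) : Prop :=
  subgroup S /\
  forall q : rat, in_nuc (fun _ : G => True) q ->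
    forall s, S s -> exists2 t, S t & t *~ denq q = s *~ numq q.

Definition Z_indep (G : zmodType) (s : seq G) : Prop :=
  forall c : nat -> int, \sum_(i < size s) s`_i *~ c i = 0 ->
    forall i, (i < size s)%N -> c i = 0.

Definition finite_rank (G : zmodType) (S : G -> Prop) : Prop :=
  exists n : nat, forall s : seq G, (forall x, x \in s -> S x) -> Z_indep s ->
    (size s <= n)%N.

(* Ext(A, G) = 0, A a subgroup of H: every extension 0 -> G -> E -> A -> 0 splits. *)
Definition Ext_zero (H : zmodType) (A : H -> Prop) (G : zmodType) : Prop :=
  forall (E : zmodType) (i : G -> E) (pi : E -> H),
    (forall x y, i (x - y) = i x - i y) ->
    (forall x y, pi (x - y) = pi x - pi y) ->
    injective i ->
    (forall e, A (pi e)) ->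
    (forall a, A a -> exists e, pi e = a) ->
    (forall e, pi e = 0 <-> exists g, i g = e) ->
    exists r : E -> G, (forall x y, r (x - y) = r x - r y) /\
                       (forall g, r (i g) = g).

Definition fr_splitter (G : zmodType) : Prop :=
  torsion_free G /\ (exists g : G, g != 0) /\
  forall S : G -> Prop, nuc_submodule S -> finite_rank S -> Ext_zero S G.

Definition pure (G : zmodType) (U : G -> Prop) : Prop :=
  subgroup U /\ forall (g : G) (n : nat), U (g *+ n.+1) -> U g.

Definition Qp (p : nat) : rat -> Prop :=
  fun q => exists (z : int) (k : nat), q = z%:~R / (p ^ k)%:R.

From HB Require Import structures.
From mathcomp Require Import all_boot all_order all_algebra ring zify.
From Stdlib Require Import ClassicalEpsilon.
Set Implicit Arguments. Unset Strict Implicit. Unset Printing Implicit Defensive.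
Import Order.TTheory GRing.Theory Num.Theory.
Local Open Scope ring_scope.

(* Since 1/p lies in nuc U and U <> 0, G contains u_0 <> 0, u_1, u_2, ... with
   p u_(M+1) = u_M.  Let R = nuc G.  The R-submodule S generated by the u_M has rank
   one, so Ext(S, G) = 0 because G is a finite-rank splitter; and S is isomorphic to
   R[1/p] via x |-> x u_0.
   Given g : nat -> G, the partial sums Gamma_N(x) = sum_(i < N) (x p^i) g_i (taken
   from the first i with x p^i in R) are not additive in x, but their defect is
   eventually constant in N and is a symmetric cocycle on R[1/p].  A splitting r of
   the extension of S by G it defines makes r(0, .) + Gamma_N additive, and evaluating
   it at p^-M gives h_M with p h_(M+1) = h_M + g_M.
   Solvability of these equations splits every extension of Q^(p) = lim (Z, p) by G:
   it provides lifts e_M of p^-M with p e_(M+1) = e_M, and z / p^k |-> z e_k is an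
   additive section. *)

Definition classicb (P : Prop) : bool :=
  if excluded_middle_informative P then true else false.

Lemma classicbP (P : Prop) : reflect P (classicb P).
Proof. by rewrite /classicb; case: excluded_middle_informative => h; constructor. Qed.

Lemma sub_morph_props (A B : zmodType) (f : A -> B) :
  (forall x y, f (x - y) = f x - f y) ->
  [/\ f 0 = 0, forall x, f (- x) = - f x, forall x y, f (x + y) = f x + f y
    & forall x n, f (x *~ n) = f x *~ n].
Proof.
move=> fB.
have f0 : f 0 = 0 by rewrite -(subrr 0) fB subrr.
have fN : forall x, f (- x) = - f x by move=> x; rewrite -sub0r fB f0 sub0r.
have fD : forall x y, f (x + y) = f x + f y.
  by move=> x y; have := fB x (- y); rewrite opprK => ->; rewrite fN opprK.
have fn : forall x (n : nat), f (x *+ n) = f x *+ n.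
  by move=> x; elim=> [|n IH]; [by rewrite !mulr0n f0 | by rewrite !mulrS fD IH].
split=> // x [] n; first by rewrite -!pmulrn fn.
by rewrite !NegzE !mulrNz fN -!pmulrn fn.
Qed.

Definition coboundary (A B : zmodType) (s : A -> B) (x y : A) : B := s (x + y) - s x - s y.

Lemma coboundaryC (A B : zmodType) (s : A -> B) x y : coboundary s x y = coboundary s y x.
Proof. by rewrite /coboundary (addrC x y) addrAC. Qed.

Lemma coboundary_add (A B : zmodType) (s t : A -> B) x y :
  coboundary (fun z => s z + t z) x y = coboundary s x y + coboundary t x y.
Proof. by rewrite /coboundary !opprD !addrA [LHS](ACl (1*3*5*2*4*6)). Qed.

Lemma coboundary_cocycle (A B : zmodType) (s : A -> B) x y z :
  coboundary s x y + coboundary s (x + y) z = coboundary s y z + coboundary s x (y + z).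
Proof.
rewrite /coboundary (addrA x y z) !addrA.
rewrite [LHS](ACl (1*5*(4*2*3*6))) [RHS](ACl (1*6*(4*5*2*3))) /=.
by rewrite !subrr !add0r.
Qed.

Definition normalized_cocycle (A Q : zmodType) (c : Q -> Q -> A) : Prop :=
  [/\ forall x y, c x y = c y x, forall y, c 0 y = 0
    & forall x y z, c x y + c (x + y) z = c y z + c x (y + z)].

Section CocycleExtension.
Variables (A Q : zmodType) (c : Q -> Q -> A) (cP : normalized_cocycle c).

Definition cext of normalized_cocycle c := (A * Q)%type.
Local Notation E := (cext cP).

Definition cext_add (x y : E) : E := (x.1 + y.1 + c x.2 y.2, x.2 + y.2).
Definition cext_opp (x : E) : E := (- x.1 - c x.2 (- x.2), - x.2).

Lemma cext_addA : associative cext_add.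
Proof.
have [_ _ cA] := cP; case=> a x [b y] [d z]; rewrite /cext_add /=; congr (_, _); last exact: addrA.
by rewrite !addrA -(addrA _ (c y z)) -cA addrA (addrAC _ d).
Qed.

Lemma cext_addC : commutative cext_add.
Proof. by have [cC _ _] := cP; case=> a x [b y]; rewrite /cext_add /= cC (addrC a) (addrC x). Qed.

Lemma cext_add0 : left_id ((0, 0) : E) cext_add.
Proof. by have [_ c0 _] := cP; case=> a x; rewrite /cext_add /= c0 !add0r addr0. Qed.

Lemma cext_addN : left_inverse ((0, 0) : E) cext_opp cext_add.
Proof.
have [cC _ _] := cP; case=> a x; rewrite /cext_add /= cC addrAC subrK addNr.
by rewrite addNr.
Qed.

HB.instance Definition _ := Choice.on E.
HB.instance Definition _ := GRing.isZmodule.Build E cext_addA cext_addC cext_add0 cext_addN.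

Definition cext_in (a : A) : E := (a, 0).

Lemma cext_addE (e e' : E) : e + e' = (e.1 + e'.1 + c e.2 e'.2, e.2 + e'.2).
Proof. by []. Qed.

Lemma cext_snd_sub (e e' : E) : (e - e').2 = e.2 - e'.2.
Proof. by []. Qed.

Lemma cext_in_sub a b : cext_in (a - b) = cext_in a - cext_in b.
Proof.
have [_ c0 _] := cP.
by rewrite /cext_in /GRing.add /= /cext_add /= oppr0 !c0 !addr0 subr0.
Qed.

Lemma cext_in_inj : injective cext_in.
Proof. by move=> a b []. Qed.

Lemma cext_snd_eq0 e : e.2 = 0 <-> exists a, cext_in a = e.
Proof. by split=> [|[a <-] //]; case: e => a q /= ->; exists a. Qed.

Section Splitting.
Variable r : E -> A.
Hypotheses (r_sub : forall e e', r (e - e') = r e - r e') (r_in : forall a, r (cext_in a) = a).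

Lemma cext_split_coboundary x y : coboundary (fun q => r (0, q)) x y = - c x y.
Proof.
have [cC c0 _] := cP.
have rD : forall e e', r (e + e') = r e + r e'.
  by have [_ _ rD _] := sub_morph_props r_sub.
have : ((0, x) : E) + (0, y) = ((0, x + y) : E) + cext_in (c x y).
  by rewrite !cext_addE /= [c _ 0]cC c0 !add0r !addr0.
move=> /(congr1 r); rewrite !rD r_in /coboundary -addrA -opprD => ->.
by rewrite opprD addrA subrr add0r.
Qed.
End Splitting.

End CocycleExtension.
Arguments cext_in {A Q c cP} a.

(* t = r g in the divisible hull of G *)
Definition scales (G : zmodType) (r : rat) (g t : G) : Prop :=
  exists a b : int, [/\ 0 < b, r = a%:~R / b%:~R & t *~ b = g *~ a].

Definition in_nucleus (G : zmodType) (r : rat) : Prop :=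
  forall g : G, exists t, scales r g t.

Section Nucleus.
Variables (G : zmodType) (tf : torsion_free G).
Implicit Types (g t : G) (r : rat).

Lemma torsion_free_mulrz g (n : int) : n != 0 -> g *~ n = 0 -> g = 0.
Proof.
case: n => [[|m]|m] //= _.
  by rewrite -pmulrn; apply: tf.
by rewrite NegzE mulrNz -pmulrn => /eqP; rewrite oppr_eq0 => /eqP; apply: tf.
Qed.

Lemma mulrz_eq_frac t g (a b a' b' : int) : 0 < b -> 0 < b' ->
  a%:~R / b%:~R = a'%:~R / b'%:~R :> rat -> t *~ b = g *~ a -> t *~ b' = g *~ a'.
Proof.
move=> b_gt0 b'_gt0 eq_frac tg.
have cross : a * b' = a' * b.
  have [b0 b'0] : (b%:~R : rat) != 0 /\ (b'%:~R : rat) != 0.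
    by rewrite !intr_eq0 !gt_eqF.
  by apply: (@intr_inj rat); rewrite !intrM; move/eqP: eq_frac; rewrite eqr_div // => /eqP.
apply/eqP; rewrite -subr_eq0; apply/eqP.
apply: (@torsion_free_mulrz _ b); first by rewrite gt_eqF.
by rewrite mulrzBl -!mulrzA -cross [b' * b]mulrC !mulrzA tg subrr.
Qed.

Lemma scales_frac r g t (a b : int) : scales r g t -> 0 < b -> r = a%:~R / b%:~R ->
  t *~ b = g *~ a.
Proof. by move=> [a0 [b0 [b0_gt0 -> tg]]] b_gt0 eq_r; apply: mulrz_eq_frac tg. Qed.

Lemma scales_uniq r g t t' : scales r g t -> scales r g t' -> t = t'.
Proof.
move=> [a [b [b_gt0 eq_r tg]]] rt'; have := scales_frac rt' b_gt0 eq_r.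
rewrite -tg => /eqP; rewrite -subr_eq0 -mulrzBl => /eqP.
by move/torsion_free_mulrz; rewrite gt_eqF // => /(_ isT) /eqP; rewrite subr_eq0 => /eqP.
Qed.

Lemma scalesD r r' g t t' : scales r g t -> scales r' g t' -> scales (r + r') g (t + t').
Proof.
move=> [a [b [b_gt0 -> tg]]] [a' [b' [b'_gt0 -> tg']]].
exists (a * b' + a' * b), (b * b'); split; first by rewrite mulr_gt0.
  by rewrite !(intrD, intrM); field; rewrite !intr_eq0 !gt_eqF.
have tb : t' *~ b *~ b' = g *~ a' *~ b by rewrite -mulrzA mulrC mulrzA tg' -!mulrzA.
by rewrite mulrzDl mulrzDr !mulrzA tg tb.
Qed.

Lemma scalesN r g t : scales r g t -> scales (- r) g (- t).
Proof.
move=> [a [b [b_gt0 -> tg]]]; exists (- a), b; split => //.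
  by rewrite intrN mulNr.
by rewrite mulNrz tg mulrNz.
Qed.

Lemma scalesM r r' g t s : scales r g t -> scales r' t s -> scales (r' * r) g s.
Proof.
move=> [a [b [b_gt0 -> tg]]] [a' [b' [b'_gt0 -> st]]].
exists (a' * a), (b' * b); split; first by rewrite mulr_gt0.
  by rewrite !intrM; field; rewrite !intr_eq0 !gt_eqF.
by rewrite mulrzA st -mulrzA mulrC (mulrzA t) tg -mulrzA mulrC.
Qed.

Lemma scales_int (n : int) g : scales n%:~R g (g *~ n).
Proof. by exists n, 1; split => //; rewrite divr1. Qed.

Lemma scalesMn r g t (n : nat) : scales r (g *+ n) t -> scales (r * n%:R) g t.
Proof.
move=> [a [b [b_gt0 -> tg]]]; exists (a * n%:Z), b; split => //.
  by rewrite intrM -pmulrn mulrAC.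
by rewrite tg pmulrn -!mulrzA mulrC.
Qed.

Lemma in_nucleusE r : in_nucleus G r <-> in_nuc (fun _ : G => True) r.
Proof.
split=> [rG g _ | rG g].
  have [t rgt] := rG g; exists t => //.
  by apply: scales_frac rgt (denq_gt0 r) _; rewrite divq_num_den.
have [t _ tg] := rG g I; exists t, (numq r), (denq r).
by split; [exact: denq_gt0 | rewrite divq_num_den | exact: tg].
Qed.

Lemma in_nucleusD r r' : in_nucleus G r -> in_nucleus G r' -> in_nucleus G (r + r').
Proof.
by move=> rG r'G g; have [t rt] := rG g; have [t' r't'] := r'G g; exists (t + t'); apply: scalesD.
Qed.

Lemma in_nucleusN r : in_nucleus G r -> in_nucleus G (- r).
Proof. by move=> rG g; have [t rt] := rG g; exists (- t); apply: scalesN. Qed.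

Lemma in_nucleusM r r' : in_nucleus G r -> in_nucleus G r' -> in_nucleus G (r' * r).
Proof.
by move=> rG r'G g; have [t rt] := rG g; have [s r's] := r'G t; exists s; apply: scalesM r's.
Qed.

Lemma in_nucleus_int (n : int) : in_nucleus G n%:~R.
Proof. by move=> g; exists (g *~ n); apply: scales_int. Qed.

Lemma in_nucleus_nat (n : nat) : in_nucleus G n%:R.
Proof. by have := in_nucleus_int n; rewrite -pmulrn. Qed.

Lemma in_nucleusMn r (n : nat) : in_nucleus G r -> in_nucleus G (r *+ n).
Proof. by move=> rG; rewrite -mulr_natl; apply: in_nucleusM rG (in_nucleus_nat n). Qed.

Lemma finite_rank_rat_multiples (w : G) (S : G -> Prop) :
  (forall t, S t -> exists a b : int, 0 < b /\ t *~ b = w *~ a) -> finite_rank S.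
Proof.
move=> Sw; exists 1%N => s sS s_indep; rewrite leqNgt; apply/negP => s_gt1.
have [a0 [b0 [b0_gt0 s0w]]] := Sw _ (sS _ (mem_nth 0 (ltnW s_gt1))).
have [a1 [b1 [b1_gt0 s1w]]] := Sw _ (sS _ (mem_nth 0 s_gt1)).
have sum2 (c : nat -> int) : (forall i, (1 < i)%N -> c i = 0) ->
    \sum_(i < size s) s`_i *~ c i = s`_0 *~ c 0%N + s`_1 *~ c 1%N.
  move=> c_eq0; case: s {sS s_indep s0w s1w} s_gt1 => [|x0 [|x1 s']] //= _.
  by rewrite !big_ord_recl /= big1 ?addr0 // => i _; rewrite c_eq0 // mulr0z.
have [a1_0 | a1_neq0] := eqVneq a1 0.
  move: s1w; rewrite a1_0 mulr0z => /(torsion_free_mulrz (negbT (gt_eqF b1_gt0))) s1_0.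
  pose c i : int := (i == 1%N)%:R.
  have := s_indep c; rewrite sum2 => [|i]; last by rewrite /c; case: eqP => // ->.
  by rewrite /c /= s1_0 mul0rz addr0 mulr0z => /(_ erefl 1%N s_gt1).
pose c i : int := if i == 0%N then a1 * b0 else if i == 1%N then - (a0 * b1) else 0.
have := s_indep c; rewrite sum2 => [|i]; last first.
  by rewrite /c; case: eqP => [->|_] //; case: eqP => // ->.
rewrite /c /= mulrNz [a1 * b0]mulrC [a0 * b1]mulrC !mulrzA s0w s1w -!mulrzA [a1 * a0]mulrC subrr.
move=> /(_ erefl 0%N (ltnW s_gt1)) /eqP.
by rewrite mulf_eq0 (gt_eqF b0_gt0) (negPf a1_neq0).
Qed.

(* An arbitrary element of G unless r is in the nucleus. *)
Definition rscale r g : G := epsilon (inhabits 0) (scales r g).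

Lemma rscaleP r g : in_nucleus G r -> scales r g (rscale r g).
Proof. by move=> rG; rewrite /rscale; apply: epsilon_spec; apply: rG. Qed.

Lemma rscale_eq r g t : scales r g t -> rscale r g = t.
Proof. by move=> rgt; apply: (scales_uniq (epsilon_spec _ _ (ex_intro _ t rgt))) rgt. Qed.

Lemma rscaleD r r' g : in_nucleus G r -> in_nucleus G r' ->
  rscale (r + r') g = rscale r g + rscale r' g.
Proof. by move=> rG r'G; apply: rscale_eq; apply: scalesD; apply: rscaleP. Qed.

Lemma rscale0 g : rscale 0 g = 0.
Proof. by apply: rscale_eq; exists 0, 1; split => //; rewrite mul0r. Qed.

Lemma rscale1 g : rscale 1 g = g.
Proof. by apply: rscale_eq; exists 1, 1; split => //; rewrite divr1. Qed.

End Nucleus.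

Section Localization.
Variables (G : zmodType) (tf : torsion_free G) (p : nat) (p_gt1 : (1 < p)%N).
Local Notation P := (p%:R : rat).
Implicit Types (q : rat) (N : nat).

Lemma expP_neq0 N : P ^+ N != 0.
Proof. by rewrite expf_neq0 // pnatr_eq0 -lt0n ltnW. Qed.

Lemma in_nucleus_expP N : in_nucleus G (P ^+ N).
Proof. by rewrite -natrX; apply: in_nucleus_nat. Qed.

Lemma in_nucleus_mulXn q M N : (M <= N)%N ->
  in_nucleus G (q * P ^+ M) -> in_nucleus G (q * P ^+ N).
Proof.
move=> le_MN qM; rewrite -(subnK le_MN) exprD mulrCA.
exact: in_nucleusM qM (in_nucleus_expP _).
Qed.

(* q lies in R[1/p], R = nuc G *)
Definition in_nucp q : Prop := exists M, in_nucleus G (q * P ^+ M).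

Lemma in_nucp0 : in_nucp 0.
Proof. by exists 0%N; rewrite mul0r; have := @in_nucleus_int G 0. Qed.

Lemma in_nucpB q q' : in_nucp q -> in_nucp q' -> in_nucp (q - q').
Proof.
move=> [M qM] [M' q'M']; exists (M + M')%N; rewrite mulrBl.
apply: in_nucleusD; first exact: in_nucleus_mulXn (leq_addr _ _) qM.
by apply: in_nucleusN; apply: in_nucleus_mulXn (leq_addl _ _) q'M'.
Qed.

(* The least M with q p^M in R when q is in R[1/p], and 0 otherwise. *)
Definition level q : nat :=
  if excluded_middle_informative (exists M, classicb (in_nucleus G (q * P ^+ M)))
  is left ex then ex_minn ex else 0%N.

Lemma levelP q : in_nucp q ->
  in_nucleus G (q * P ^+ level q) /\ forall M, in_nucleus G (q * P ^+ M) -> (level q <= M)%N.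
Proof.
move=> [M qM]; rewrite /level; case: excluded_middle_informative => [ex|]; last first.
  by case; exists M; apply/classicbP.
case: ex_minnP => m /classicbP qm min_m; split => // M' qM'.
by apply: min_m; apply/classicbP.
Qed.

Lemma in_nucleus_level q N : in_nucp q -> (level q <= N)%N -> in_nucleus G (q * P ^+ N).
Proof. by move=> /levelP [ql _] le_lN; apply: in_nucleus_mulXn le_lN ql. Qed.

Lemma level_le q N : in_nucleus G (q * P ^+ N) -> (level q <= N)%N.
Proof. by move=> qN; have [_] := levelP (ex_intro _ N qN); apply. Qed.

Definition in_nucpb : {pred rat} := fun q => classicb (in_nucp q).

Lemma in_nucpb_zmod_closed : zmod_closed in_nucpb.
Proof.
split=> [|q q' /classicbP qR /classicbP q'R]; apply/classicbP; first exact: in_nucp0.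
exact: in_nucpB.
Qed.

HB.instance Definition _ := GRing.isZmodClosed.Build rat in_nucpb in_nucpb_zmod_closed.

Record nucp := NucP { nucp_val :> rat; _ : nucp_val \in in_nucpb }.
HB.instance Definition _ := [isSub for nucp_val].
HB.instance Definition _ := [Choice of nucp by <:].
HB.instance Definition _ := [SubChoice_isSubZmodule of nucp by <:].
Implicit Types (x y z : nucp).

Lemma nucp_val0 : nucp_val 0 = 0. Proof. by []. Qed.
Lemma nucp_valD x y : nucp_val (x + y) = nucp_val x + nucp_val y. Proof. by []. Qed.
Lemma nucp_valN x : nucp_val (- x) = - nucp_val x. Proof. by []. Qed.

Lemma nucp_valMn x n : nucp_val (x *+ n) = nucp_val x *+ n.
Proof. by elim: n => // n IH; rewrite !mulrS nucp_valD IH. Qed.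

Lemma nucpP x : in_nucp x.
Proof. by case: x => q qR; apply/classicbP. Qed.

Lemma in_nucleus_nucp x N : (level x <= N)%N -> in_nucleus G ((x : rat) * P ^+ N).
Proof. exact/in_nucleus_level/nucpP. Qed.

Lemma in_nucp_invX N : (P ^+ N)^-1 \in in_nucpb.
Proof. by apply/classicbP; exists N; rewrite mulVf ?expP_neq0 //; have := @in_nucleus_nat G 1. Qed.

Definition nucp_invX N : nucp := NucP (in_nucp_invX N).

Lemma nucp_invXE N : nucp_val (nucp_invX N) = (P ^+ N)^-1.
Proof. by []. Qed.

Section Cocycle.
Variable g : nat -> G.

Definition psum q N : G := \sum_(level q <= i < N) rscale (q * P ^+ i) (g i).

Lemma psumS q N : (level q <= N)%N -> psum q N.+1 = psum q N + rscale (q * P ^+ N) (g N).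
Proof. by move=> le_lN; rewrite /psum big_nat_recr. Qed.

Lemma psum0 N : psum 0 N = 0.
Proof. by rewrite /psum big1 // => i _; rewrite mul0r (rscale0 tf). Qed.

Lemma coboundary_psumS x y N :
  (level x <= N)%N -> (level y <= N)%N -> (level (x + y) <= N)%N ->
  coboundary (fun z : nucp => psum z N.+1) x y = coboundary (fun z : nucp => psum z N) x y.
Proof.
move=> lx ly lxy; pose phi (z : nucp) := rscale ((z : rat) * P ^+ N) (g N).
have -> : coboundary (fun z : nucp => psum z N.+1) x y =
          coboundary (fun z => psum z N + phi z) x y by rewrite /coboundary !psumS.
rewrite coboundary_add [coboundary phi _ _](_ : _ = 0) ?addr0 //.
rewrite /coboundary /phi nucp_valD mulrDl (rscaleD tf); first by rewrite -addrA -opprD subrr.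
all: exact: in_nucleus_nucp.
Qed.

Lemma coboundary_psum_stable x y N N' :
  (level x <= N)%N -> (level y <= N)%N -> (level (x + y) <= N)%N -> (N <= N')%N ->
  coboundary (fun z : nucp => psum z N') x y = coboundary (fun z : nucp => psum z N) x y.
Proof.
move=> lx ly lxy; elim: N' => [|N' IH]; first by rewrite leqn0 => /eqP ->.
rewrite leq_eqVlt => /orP [/eqP -> // | ]; rewrite ltnS => le_NN'.
by rewrite coboundary_psumS ?IH //; apply: leq_trans le_NN'.
Qed.

(* The defect of psum is independent of N once N exceeds the levels involved. *)
Definition cocycle x y : G :=
  coboundary (fun z : nucp => psum z (level x + level y + level (x + y))) x y.

Lemma cocycleE x y N :
  (level x <= N)%N -> (level y <= N)%N -> (level (x + y) <= N)%N ->
  cocycle x y = coboundary (fun z : nucp => psum z N) x y.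
Proof.
move=> lx ly lxy; rewrite /cocycle; set L := (_ + _ + _)%N.
have [le_LN | le_NL] := leqP L N.
  by rewrite (coboundary_psum_stable _ _ _ le_LN) // /L; lia.
by rewrite (coboundary_psum_stable _ _ _ (ltnW le_NL)).
Qed.

Lemma cocycle_normalized : normalized_cocycle cocycle.
Proof.
split=> [x y | y | x y z].
- by rewrite /cocycle coboundaryC (addrC x y) (addnC (level x)).
- by rewrite /cocycle /coboundary add0r nucp_val0 psum0 subr0 subrr.
set N := (level x + level y + level z + level (x + y) + level (y + z) + level (x + y + z))%N.
have lxyz : (level (x + (y + z)) <= N)%N by rewrite addrA leq_addl.
rewrite !(@cocycleE _ _ N) ?coboundary_cocycle // /N;
  do ![exact: leq_addl | exact: leq_addr | apply: leq_trans _ (leq_addr _ _)].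
Qed.

End Cocycle.

Section Solution.
Variables (g : nat -> G) (r : cext (cocycle_normalized g) -> G).
Hypotheses (r_sub : forall e e', r (e - e') = r e - r e') (r_in : forall a, r (cext_in a) = a).

Definition linearized N x : G := r (0, x) + psum g x N.

Lemma linearizedD N x y :
  (level x <= N)%N -> (level y <= N)%N -> (level (x + y) <= N)%N ->
  linearized N (x + y) = linearized N x + linearized N y.
Proof.
move=> lx ly lxy; have : coboundary (linearized N) x y = 0.
  by rewrite coboundary_add (cext_split_coboundary r_sub r_in) -(cocycleE g lx ly lxy) addNr.
by rewrite /coboundary -addrA -opprD => /eqP; rewrite subr_eq0 => /eqP.
Qed.

Lemma linearizedMn N x n : (level x <= N)%N -> linearized N (x *+ n) = linearized N x *+ n.
Proof.
move=> lx; have lxn m : (level (x *+ m) <= N)%N.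
  by apply: level_le; rewrite nucp_valMn mulrnAl; apply/in_nucleusMn/in_nucleus_nucp.
elim: n => [|n IH]; first by rewrite !mulr0n /linearized /= psum0 r_in addr0.
by rewrite mulrSr linearizedD ?IH -?mulrSr.
Qed.

Lemma linearizedS N x : (level x <= N)%N ->
  linearized N.+1 x = linearized N x + rscale ((x : rat) * P ^+ N) (g N).
Proof. by move=> lx; rewrite /linearized psumS // addrA. Qed.

Definition solution M : G := linearized M (nucp_invX M).

Lemma solutionS M : solution M.+1 *+ p = solution M + g M.
Proof.
have invX_level N : (level (nucp_invX N) <= N)%N.
  by apply: level_le; rewrite nucp_invXE mulVf ?expP_neq0 //; have := @in_nucleus_nat G 1.
have invXS : nucp_invX M.+1 *+ p = nucp_invX M.
  have P_neq0 : P != 0 by have := expP_neq0 1; rewrite expr1.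
  have invP_p : P^-1 *+ p = 1 by rewrite -(mulr1 P^-1) -mulrnAr mulVf.
  by apply: val_inj; rewrite /= nucp_valMn !nucp_invXE exprS invfM -mulrnAl invP_p mul1r.
rewrite /solution -linearizedMn // invXS linearizedS // nucp_invXE mulVf ?expP_neq0 //.
by rewrite (rscale1 tf).
Qed.

End Solution.

Section Embedding.
Variables (u : nat -> G) (uS : forall M, u M.+1 *+ p = u M).

Lemma scales_u_shift r M t j : scales r (u M) t -> scales (r * P ^+ j) (u (M + j)) t.
Proof.
elim: j => [|j IH]; first by rewrite expr0 mulr1 addn0.
by move=> /IH; rewrite -uS addnS => /scalesMn; rewrite exprSr mulrA.
Qed.

(* x u_0, computed as (x p^k) u_k at the level k of x *)
Definition embed x : G := rscale ((x : rat) * P ^+ level x) (u (level x)).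

Lemma embed_scales x N : (level x <= N)%N -> scales ((x : rat) * P ^+ N) (u N) (embed x).
Proof.
move=> le_xN; have ux := rscaleP (u (level x)) (@in_nucleus_nucp x _ (leqnn _)).
have := scales_u_shift (N - level x) ux.
by rewrite subnKC // -mulrA -exprD subnKC.
Qed.

Lemma embedB x y : embed (x - y) = embed x - embed y.
Proof.
set N := (level x + level y + level (x - y))%N.
apply: (scales_uniq tf (embed_scales _)); first exact: leq_addl.
rewrite nucp_valD nucp_valN mulrBl.
by apply: scalesD; [|apply: scalesN]; apply: embed_scales; rewrite /N; lia.
Qed.

Lemma embed0 : embed 0 = 0.
Proof. by rewrite -(subrr (0 : nucp)) embedB subrr. Qed.

Lemma embed_eq0 x : u 0 != 0 -> embed x = 0 -> x = 0.
Proof.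
move=> u0_neq0 x0.
have u_neq0 N : u N != 0.
  by elim: N => // N IH; apply: contra_neq IH => uN0; rewrite -uS uN0 mul0rn.
have [a [b [b_gt0 eq_x ab]]] := embed_scales (leqnn (level x)).
move: ab; rewrite x0 mul0rz => /esym ua.
have a0 : a = 0.
  apply/eqP; apply: contraT => a_neq0; have := u_neq0 (level x).
  by rewrite (torsion_free_mulrz tf a_neq0 ua) eqxx.
apply: val_inj; move/eqP: eq_x; rewrite a0 mul0r mulf_eq0 (negPf (expP_neq0 _)) orbF.
by move/eqP.
Qed.

Definition u_span (t : G) : Prop := exists M r, in_nucleus G r /\ scales r (u M) t.

Lemma u_span_embed x : u_span (embed x).
Proof.
exists (level x), ((x : rat) * P ^+ level x).
by split; [exact: in_nucleus_nucp | exact: embed_scales].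
Qed.

Lemma embed_onto t : u_span t -> exists x, embed x = t.
Proof.
move=> [M [r [rG rt]]].
have xR : r / P ^+ M \in in_nucpb by apply/classicbP; exists M; rewrite divfK ?expP_neq0.
exists (NucP xR); set N := (level (NucP xR) + M)%N.
apply: (scales_uniq tf (embed_scales (leq_addr _ _ : (_ <= N)%N))).
have -> : (NucP xR : rat) * P ^+ N = r * P ^+ (N - M).
  by rewrite /= -{1}(subnK (leq_addl _ M : (M <= N)%N)) exprD mulrA mulrAC divfK ?expP_neq0.
by have := scales_u_shift (N - M) rt; rewrite subnKC // leq_addl.
Qed.

Lemma u_span_subgroup : subgroup u_span.
Proof.
split=> [|s t /embed_onto [x <-] /embed_onto [y <-]]; last by rewrite -embedB; apply: u_span_embed.
by rewrite -embed0; apply: u_span_embed.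
Qed.

Lemma u_span_nuc_submodule : nuc_submodule u_span.
Proof.
split=> [|q /(in_nucleusE tf) qG s [M [r [rG rs]]]]; first exact: u_span_subgroup.
have qs := rscaleP s qG; exists (rscale q s).
  by exists M, (q * r); split; [exact: in_nucleusM | exact: scalesM qs].
by apply: (scales_frac tf qs (denq_gt0 q)); rewrite divq_num_den.
Qed.

Lemma u_span_finite_rank : finite_rank u_span.
Proof.
apply: (finite_rank_rat_multiples tf (w := u 0)) => t [M [_ [_ [a [b [b_gt0 _ tb]]]]]].
exists a, (b * (p ^ M)%:Z); split; first by rewrite mulr_gt0 // ltz_nat expn_gt0 ltnW.
have uM : u M *+ p ^ M = u 0 by elim: M {tb} => [|M IH]; rewrite ?mulr1n // expnS mulrnA uS.
by rewrite mulrzA tb -mulrzA mulrC mulrzA -pmulrn uM.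
Qed.

Lemma Ext_zero_u_span_solvable : u 0 != 0 -> Ext_zero u_span G ->
  forall g : nat -> G, exists h : nat -> G, forall M, h M.+1 *+ p = h M + g M.
Proof.
move=> u0_neq0 u_split g.
have [r [r_sub r_in]] : exists r : cext (cocycle_normalized g) -> G,
    (forall e e', r (e - e') = r e - r e') /\ forall a, r (cext_in a) = a.
  apply: (u_split _ cext_in (fun e => embed e.2)).
  - exact: cext_in_sub.
  - by move=> e e'; rewrite cext_snd_sub embedB.
  - exact: cext_in_inj.
  - by move=> e; apply: u_span_embed.
  - by move=> t /embed_onto [x <-]; exists (0, x).
  - by move=> e; rewrite -cext_snd_eq0; split=> [/(embed_eq0 u0_neq0) // | ->]; exact embed0.
by exists (solution r); apply: solutionS.
Qed.

End Embedding.
End Localization.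

Section QpExtensions.
Variables (p : nat) (p_gt1 : (1 < p)%N).

Lemma expn_natr_neq0 k : ((p ^ k)%:R : rat) != 0.
Proof. by rewrite pnatr_eq0 -lt0n expn_gt0 ltnW. Qed.

Lemma Qp_frac_eq (z z' : int) k k' :
  z%:~R / (p ^ k)%:R = z'%:~R / (p ^ k')%:R :> rat -> z * (p ^ k')%:Z = z' * (p ^ k)%:Z.
Proof.
move/eqP; rewrite eqr_div ?expn_natr_neq0 // => /eqP eq_cross.
by apply: (@intr_inj rat); rewrite !intrM -!pmulrn.
Qed.

Section Lift.
Variables (E : zmodType) (pi : E -> rat) (e : nat -> E).
Hypotheses (pi_sub : forall x y, pi (x - y) = pi x - pi y)
  (pi_e : forall M, pi (e M) = (p ^ M)%:R^-1) (eS : forall M, e M.+1 *+ p = e M).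

Definition Qp_repr (a : rat) : int * nat :=
  epsilon (inhabits (0, 0%N)) (fun zk => a = zk.1%:~R / (p ^ zk.2)%:R).

Definition Qp_lift (a : rat) : E := e (Qp_repr a).2 *~ (Qp_repr a).1.

Lemma e_mulrz_shift k j (z : int) : e k *~ z = e (k + j) *~ (z * (p ^ j)%:Z).
Proof.
have e_pow : e (k + j) *+ p ^ j = e k.
  by elim: j => [|j IH]; rewrite ?addn0 ?mulr1n // expnS mulrnA addnS eS.
by rewrite -e_pow pmulrn -mulrzA mulrC.
Qed.

Lemma Qp_liftE a (z : int) k : a = z%:~R / (p ^ k)%:R -> Qp_lift a = e k *~ z.
Proof.
move=> eq_a; have eq_repr : a = (Qp_repr a).1%:~R / (p ^ (Qp_repr a).2)%:R.
  by apply: (epsilon_spec _ (fun zk : int * nat => a = zk.1%:~R / (p ^ zk.2)%:R)); exists (z, k).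
rewrite /Qp_lift (e_mulrz_shift _ k) (e_mulrz_shift k (Qp_repr a).2) addnC.
by congr (_ *~ _); apply: Qp_frac_eq; rewrite -eq_repr.
Qed.

Lemma pi_Qp_lift a : Qp p a -> pi (Qp_lift a) = a.
Proof.
have [_ _ _ piZ] := sub_morph_props pi_sub.
by move=> [z [k eq_a]]; rewrite (Qp_liftE eq_a) piZ pi_e eq_a -mulrzl mulrC.
Qed.

Lemma Qp_liftB a b : Qp p a -> Qp p b -> Qp_lift (a - b) = Qp_lift a - Qp_lift b.
Proof.
move=> [z [k eq_a]] [z' [k' eq_b]].
rewrite (Qp_liftE eq_a) (Qp_liftE eq_b) (e_mulrz_shift k k') (e_mulrz_shift k' k) (addnC k').
rewrite -mulrzBr; apply: Qp_liftE.
rewrite eq_a eq_b expnD natrM intrB !intrM -!pmulrn.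
by field; rewrite !expn_natr_neq0.
Qed.

Lemma Qp_lift0 : Qp_lift 0 = 0.
Proof. by rewrite (@Qp_liftE 0 0 0) ?mulr0z // mul0r. Qed.

End Lift.

Section QpSplitting.
Variables (G E : zmodType) (i : G -> E) (pi : E -> rat).
Hypotheses (i_sub : forall x y, i (x - y) = i x - i y)
  (pi_sub : forall x y, pi (x - y) = pi x - pi y) (i_inj : injective i)
  (pi_Qp : forall x, Qp p (pi x)) (pi_onto : forall a, Qp p a -> exists x, pi x = a)
  (pi_ker : forall x, pi x = 0 <-> exists a, i a = x).
Hypothesis solvable : forall g : nat -> G, exists h : nat -> G, forall M, h M.+1 *+ p = h M + g M.

Lemma compatible_lifts :
  exists e : nat -> E, (forall M, pi (e M) = (p ^ M)%:R^-1) /\ forall M, e M.+1 *+ p = e M.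
Proof.
have [_ iN iD iZ] := sub_morph_props i_sub.
have [_ _ piD piZ] := sub_morph_props pi_sub.
pose lift M := epsilon (inhabits 0) (fun x => pi x = (p ^ M)%:R^-1).
have pi_lift M : pi (lift M) = (p ^ M)%:R^-1.
  by apply: (epsilon_spec _ (fun x => pi x = _)); apply: pi_onto; exists 1, M; rewrite mul1r.
pose d M := epsilon (inhabits 0) (fun a => i a = lift M.+1 *+ p - lift M).
have i_d M : i (d M) = lift M.+1 *+ p - lift M.
  apply: (epsilon_spec _ (fun a => i a = _)); apply/pi_ker.
  rewrite pi_sub pmulrn piZ -pmulrn !pi_lift -[(p ^ M.+1)%:R^-1 *+ p]mulr_natr.
  by rewrite expnS natrM invfM mulrAC mulVf ?mul1r ?subrr // pnatr_eq0 -lt0n ltnW.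
have [h hS] := solvable (fun M => - d M).
exists (fun M => lift M + i (h M)); split=> M.
  by rewrite piD pi_lift (_ : pi (i (h M)) = 0) ?addr0 //; apply/pi_ker; exists (h M).
rewrite mulrnDl -[i (h M.+1) *+ p]mulrz_nat -iZ mulrz_nat hS iD.
by rewrite iN i_d opprB addrCA (addrCA (lift M.+1 *+ p)) subrr addr0 addrC.
Qed.

Lemma Qp_extension_splits :
  exists r : E -> G, (forall x y, r (x - y) = r x - r y) /\ forall a, r (i a) = a.
Proof.
have [e [pi_e eS]] := compatible_lifts.
pose r x := epsilon (inhabits 0) (fun a => i a = x - Qp_lift e (pi x)).
have i_r x : i (r x) = x - Qp_lift e (pi x).
  apply: (epsilon_spec _ (fun a => i a = _)); apply/pi_ker.
  by rewrite pi_sub pi_Qp_lift ?subrr.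
have pi_i a : pi (i a) = 0 by apply/pi_ker; exists a.
exists r; split=> [x y | a]; apply: i_inj; rewrite i_r; last by rewrite pi_i (Qp_lift0 eS) subr0.
rewrite i_sub !i_r pi_sub (Qp_liftB eS) // !opprB !addrA.
by rewrite [LHS](ACl (1*4*3*2)).
Qed.

End QpSplitting.

Lemma Ext_zero_Qp_of_solvable (G : zmodType) :
  (forall g : nat -> G, exists h : nat -> G, forall M, h M.+1 *+ p = h M + g M) ->
  Ext_zero (Qp p) G.
Proof. by move=> solvable E i pi *; apply: Qp_extension_splits. Qed.

End QpExtensions.

Lemma p_divisible_chain (G : zmodType) (U : G -> Prop) (p : nat) (u : G) :
  torsion_free G -> (0 < p)%N -> in_nuc U (p%:R)^-1 -> U u ->
  exists v : nat -> G, v 0%N = u /\ forall M, v M.+1 *+ p = v M.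
Proof.
move=> tf p_gt0 invpU Uu.
have divU s : U s -> exists t, U t /\ t *+ p = s.
  move=> Us; have [t Ut tp] := invpU s Us; exists t; split => //.
  rewrite pmulrn -(mulr1z s); apply: (mulrz_eq_frac tf (denq_gt0 _) _ _ tp) => //.
  by rewrite divq_num_den -!pmulrn div1r.
pose next s := epsilon (inhabits 0) (fun t => U t /\ t *+ p = s).
have nextP s : U s -> U (next s) /\ next s *+ p = s.
  by move=> /divU; apply: epsilon_spec.
exists (fun M => iter M next u); split=> // M.
have vU : forall M, U (iter M next u) by elim=> //= M' IH; case: (nextP _ IH).
by case: (nextP _ (vU M)).
Qed.

Theorem proposition4p3 (G : zmodType) (U : G -> Prop) (p : nat) :
  fr_splitter G ->
  pure U -> (exists2 u, U u & u != 0) ->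
  prime p ->
  in_nuc U (p%:R)^-1 -> ~ in_nuc (fun _ : G => True) (p%:R)^-1 ->
  Ext_zero (Qp p) G.
Proof.
move=> [tf [_ splitter]] _ [w Uw w_neq0] /prime_gt1 p_gt1 invpU _.
have [u [u_0 uS]] := p_divisible_chain tf (ltnW p_gt1) invpU Uw.
have u0 : u 0%N != 0 by rewrite u_0.
apply: (Ext_zero_Qp_of_solvable p_gt1).
apply: (Ext_zero_u_span_solvable tf p_gt1 uS u0); apply: splitter.
- exact (u_span_nuc_submodule tf p_gt1 uS).
- exact (u_span_finite_rank tf p_gt1 uS).
Qed.
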